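(* Let $\mathbf A=(A,\land,\lor,{}',0,1)$ be a pseudo-Kleene lattice. Then $\mathbf A$ is super-paraorthomodular if and only if $\mathbf A$ is a pasting of its Kleene blocks, i.e. for all $x,y\in A$: $x\leq y$ if and only if there is a Kleene block $\mathbf K$ of $\mathbf A$ with $x,y\in K$ and $x\leq y$ in $\mathbf K$.
   Context: A pseudo-Kleene lattice is an algebra $(A,\land,\lor,{}',0,1)$ such that $(A,\land,\lor,0,1)$ is a bounded lattice, ${}'$ is an antitone involution ($x\leq y$ implies $y'\leq x'$, and $x''=x$), and $x\land x'\leq y\lor y'$ for all $x,y$. A pseudo-Kleene lattice is super-paraorthomodular (sp-orthomodular) if it satisfies, for all $x,y$: (SP1) if $x\leq y$ and $x'\land y=(x\land x')\lor(y\land y')$, then $y\land(x\lor x')=x\lor(y\land y')$; (SP2) if $x\leq y$, then $(x\land x')\lor(y\land y')=(x'\land y)\land(x'\land y)'$. A Kleene sub-lattice of a pseudo-Kleene lattice $\mathbf A$ is a subset containing $0,1$ and closed under $\land,\lor,{}'$ which is distributive as a lattice; a Kleene block is a maximal (under inclusion) Kleene sub-lattice. *)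

From mathcomp Require Import all_boot all_order.
Set Implicit Arguments. Unset Strict Implicit. Unset Printing Implicit Defensive.
Import Order.LTheory.
Local Open Scope order_scope.

Definition pseudo_kleene {d : Order.disp_t} {T : tbLatticeType d} (c : T -> T) : Prop :=
  [/\ (forall x y : T, x <= y -> c y <= c x),
      (forall x : T, c (c x) = x) &
      (forall x y : T, x `&` c x <= y `|` c y)].

Definition sp_orthomodular {d : Order.disp_t} {T : tbLatticeType d} (c : T -> T) : Prop :=
  (forall x y : T, x <= y ->
     c x `&` y = (x `&` c x) `|` (y `&` c y) ->
     y `&` (x `|` c x) = x `|` (y `&` c y)) /\
  (forall x y : T, x <= y ->
     (x `&` c x) `|` (y `&` c y) = (c x `&` y) `&` c (c x `&` y)).

Definition kleene_sublattice {d : Order.disp_t} {T : tbLatticeType d} (c : T -> T)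
    (K : T -> Prop) : Prop :=
  K \bot /\ K \top /\
  (forall x y, K x -> K y -> K (x `&` y)) /\
  (forall x y, K x -> K y -> K (x `|` y)) /\
  (forall x, K x -> K (c x)) /\
  (forall x y z, K x -> K y -> K z -> x `&` (y `|` z) = (x `&` y) `|` (x `&` z)).

Definition kleene_block {d : Order.disp_t} {T : tbLatticeType d} (c : T -> T)
    (K : T -> Prop) : Prop :=
  kleene_sublattice c K /\
  forall K' : T -> Prop, kleene_sublattice c K' -> (forall x, K x -> K' x) ->
    forall x, K' x -> K x.

(* A is a pasting of its Kleene blocks: x <= y iff x, y lie in a common Kleene
   block K and x <= y in K (the order of K is the restriction of that of A). *)
Definition pasting_of_kleene_blocks {d : Order.disp_t} {T : tbLatticeType d}
    (c : T -> T) : Prop :=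
  forall x y : T, x <= y <-> exists K : T -> Prop, [/\ kleene_block c K, K x, K y & x <= y].

(** Distributivity gives (SP1) and (SP2) inside any Kleene block, so a pasting
    of Kleene blocks is sp-orthomodular.  Conversely, let a <= b in an
    sp-orthomodular lattice and evaluate at a and b the twenty elements of the
    free Kleene algebra on the chain a <= b.  Their truth tables over the
    three-element Kleene chain predict every meet, join and complement among
    them; complements and joins are right by De Morgan, and the predicted meets
    follow from two inequalities: (a' /\ b) /\ (a \/ b') <= (a /\ a') \/ (b /\ b'),
    which is (SP2), and x' /\ (x \/ y') <= y' \/ (x /\ x') for x <= y, derived
    from (SP1) and (SP2) and used for a <= b and b' <= a'.  The twenty elements
    thus form a Kleene sub-lattice, distributive because the truth tables are,
    and Zorn's lemma enlarges it to a Kleene block. *)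
From mathcomp Require Import all_boot all_order.
From mathcomp Require Import boolp classical_sets.
Set Implicit Arguments.
Unset Strict Implicit.
Unset Printing Implicit Defensive.
Import Order.LTheory.
Local Open Scope order_scope.

Lemma le_via {d : Order.disp_t} {T : latticeType d} (p q x y : T) :
  p <= q -> x <= p -> q <= y -> x <= y.
Proof. by move=> pq xp qy; apply: le_trans xp (le_trans pq qy). Qed.

Arguments le_via {d T p q x y}.

Lemma join_le {d : Order.disp_t} {T : latticeType d} (x y z : T) :
  x <= z -> y <= z -> x `|` y <= z.
Proof. by move=> xz yz; rewrite leUx xz yz. Qed.

Lemma le_meet {d : Order.disp_t} {T : latticeType d} (x y z : T) :
  x <= y -> x <= z -> x <= y `&` z.
Proof. by move=> xy xz; rewrite lexI xy xz. Qed.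

(* Depth-bounded search for a lattice inequality: decompose joins on the left
   and meets on the right, try the projections, and chain through at most [n]
   hypotheses of the form [_ `&` _ <= _]. *)
Ltac lat_hyp n :=
  lazymatch n with
  | S ?m => match goal with H : is_true (_ `&` _ <= _) |- _ =>
              apply: (le_via H); [lat_solve m | lat_solve m] end
  end
with lat_solve n :=
  match goal with
  | |- is_true (?x <= ?x) => exact: lexx
  | |- is_true (\bot <= _) => exact: le0x
  | |- is_true (_ <= \top) => exact: lex1
  | |- is_true (_ `|` _ <= _) => apply: join_le; lat_solve n
  | |- is_true (_ <= _ `&` _) => apply: le_meet; lat_solve n
  | |- is_true (_ `&` _ <= _ `|` _) =>
      first [ apply: leIxl; lat_solve n | apply: leIxr; lat_solve n
            | apply: lexUl; lat_solve n | apply: lexUr; lat_solve n | lat_hyp n ]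
  | |- is_true (_ `&` _ <= _) =>
      first [ apply: leIxl; lat_solve n | apply: leIxr; lat_solve n | lat_hyp n ]
  | |- is_true (_ <= _ `|` _) =>
      first [ apply: lexUl; lat_solve n | apply: lexUr; lat_solve n | lat_hyp n ]
  | _ => first [ assumption | lat_hyp n ]
  end.

Section AntitoneInvolution.
Variables (d : Order.disp_t) (T : tbLatticeType d) (c : T -> T).
Hypothesis c_anti : forall x y : T, x <= y -> c y <= c x.
Hypothesis cK : forall x : T, c (c x) = x.

Lemma le_compl x y : (c x <= c y) = (y <= x).
Proof. by apply/idP/idP => [/c_anti|/c_anti //]; rewrite !cK. Qed.

Lemma complI x y : c (x `&` y) = c x `|` c y.
Proof.
apply: le_anti; rewrite leUx !c_anti ?leIl ?leIr // andbT.
by rewrite -[c x `|` c y]cK c_anti // lexI -(le_compl x) -(le_compl y) cK leUl leUr.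
Qed.

Lemma complU x y : c (x `|` y) = c x `&` c y.
Proof. by rewrite -[c x `&` c y]cK complI !cK. Qed.

Lemma compl0 : c \bot = \top.
Proof. by apply/le_anti; rewrite lex1 -[X in X <= _]cK c_anti ?le0x. Qed.

Lemma compl1 : c \top = \bot.
Proof. by rewrite -compl0 cK. Qed.

Section KleeneSublattice.
Variable K : T -> Prop.
Hypothesis K_kleene : kleene_sublattice c K.

Lemma kleene_sublattice_sp1 x y : K x -> K y -> x <= y ->
  c x `&` y = (x `&` c x) `|` (y `&` c y) ->
  y `&` (x `|` c x) = x `|` (y `&` c y).
Proof.
case: K_kleene => _ [_ [_ [_ [Kc Kdistr]]]] Kx Ky xy spl.
have Kcx := Kc x Kx.
rewrite Kdistr // meetC (meet_l xy) [y `&` c x]meetC spl joinA.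
by rewrite [x `|` _](join_l (leIl _ _)).
Qed.

Lemma kleene_sublattice_sp2 x y : K x -> K y -> x <= y ->
  (x `&` c x) `|` (y `&` c y) = (c x `&` y) `&` c (c x `&` y).
Proof.
case: K_kleene => _ [_ [KI [_ [Kc Kdistr]]]] Kx Ky xy.
have cyx : c y <= c x by apply: c_anti.
have [Kcy Kcxy] := (Kc y Ky, KI _ _ (Kc x Kx) Ky).
rewrite complI cK Kdistr //.
by congr (_ `|` _); apply: le_anti; apply/andP; split; lat_solve 0.
Qed.

End KleeneSublattice.

Section SpOrthomodular.
Hypothesis sp1 : forall x y : T, x <= y ->
  c x `&` y = (x `&` c x) `|` (y `&` c y) ->
  y `&` (x `|` c x) = x `|` (y `&` c y).
Hypothesis sp2 : forall x y : T, x <= y ->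
  (x `&` c x) `|` (y `&` c y) = (c x `&` y) `&` c (c x `&` y).

Lemma sp2_le {x y} : x <= y ->
  (c x `&` y) `&` (x `|` c y) <= (x `&` c x) `|` (y `&` c y).
Proof. by move=> xy; rewrite (sp2 xy) complI cK. Qed.

(* (SP1) for z := x \/ (x' /\ y) <= w := y /\ (x \/ x') gives
   w /\ (z \/ z') = z \/ (w /\ w'); (SP2) for x <= y identifies z' /\ w with
   (x /\ x') \/ (y /\ y'), which yields the premise of (SP1) and reduces its
   two sides to w and z. *)
Lemma sp_meet_join_le {x y} : x <= y -> y `&` (x `|` c x) <= x `|` (c x `&` y).
Proof.
move=> xy; have cyx : c y <= c x by apply: c_anti.
have sp2xy := sp2_le xy.
set z := x `|` (c x `&` y); set w := y `&` (x `|` c x).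
have czE : c z = c x `&` (x `|` c y) by rewrite /z complU complI !cK.
have cwE : c w = c y `|` (c x `&` x) by rewrite /w complI complU cK.
have zw : z <= w by rewrite /z /w; lat_solve 0.
have cwz : c w <= c z by apply: c_anti.
have czw : c z `&` w = (x `&` c x) `|` (y `&` c y).
  by apply: le_anti; apply/andP; split; rewrite czE /w; lat_solve 1.
have czw_sp : c z `&` w = (z `&` c z) `|` (w `&` c w).
  apply: le_anti; apply/andP; split; last by lat_solve 1.
  by rewrite czw czE cwE /z /w; lat_solve 0.
have w_le : w <= z `|` c z.
  rewrite -le_compl complU cK.
  have : c z `&` z <= c z `&` w by lat_solve 1.
  by rewrite czw => /le_trans; apply; rewrite cwE; lat_solve 0.
have ww_le : w `&` c w <= z.
  have : w `&` c w <= c z `&` w by lat_solve 1.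
  by rewrite czw => /le_trans; apply; rewrite /z; lat_solve 1.
by have := sp1 zw czw_sp; rewrite (meet_l w_le) (join_l ww_le) => ->.
Qed.

Lemma sp_meet_join_le_dual {x y} : x <= y ->
  c x `&` (x `|` c y) <= c y `|` (x `&` c x).
Proof.
move=> xy; have := sp_meet_join_le xy.
by rewrite -le_compl !(complI, complU) !cK [c x `&` x]meetC.
Qed.

End SpOrthomodular.
End AntitoneInvolution.

Section KleeneBlockExtension.
Local Open Scope classical_set_scope.
Variables (d : Order.disp_t) (T : tbLatticeType d) (c : T -> T).

Lemma kleene_sublattice_bigcup (I : Type) (P : set I) (K : I -> set T) :
  P !=set0 -> (forall i, P i -> kleene_sublattice c (K i)) ->
  (forall i j, P i -> P j -> K i `<=` K j \/ K j `<=` K i) ->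
  kleene_sublattice c (\bigcup_(i in P) K i).
Proof.
move=> [i0 Pi0] Kks Ktot.
have common3 x y z : (\bigcup_(i in P) K i) x -> (\bigcup_(i in P) K i) y ->
    (\bigcup_(i in P) K i) z -> exists2 i, P i & [/\ K i x, K i y & K i z].
  have up i j : P i -> P j -> exists2 k, P k & K i `<=` K k /\ K j `<=` K k.
    move=> Pi Pj; have [ij|ji] := Ktot i j Pi Pj.
      by exists j => //; split.
    by exists i => //; split.
  move=> [i Pi Kix] [j Pj Kjy] [k Pk Kkz].
  have [l Pl [il jl]] := up i j Pi Pj; have [m Pm [lm km]] := up l k Pl Pk.
  by exists m => //; split; [exact/lm/il | exact/lm/jl | exact/km].
have [Kbot [Ktop _]] := Kks i0 Pi0.
split; first by exists i0.
split; first by exists i0.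
split.
  move=> x y Ux Uy; have [i Pi [Kx Ky _]] := common3 x y x Ux Uy Ux.
  by have [_ [_ [KI _]]] := Kks i Pi; exists i => //; apply: KI.
split.
  move=> x y Ux Uy; have [i Pi [Kx Ky _]] := common3 x y x Ux Uy Ux.
  by have [_ [_ [_ [KU _]]]] := Kks i Pi; exists i => //; apply: KU.
split.
  move=> x Ux; have [i Pi [Kx _ _]] := common3 x x x Ux Ux Ux.
  by have [_ [_ [_ [_ [Kc _]]]]] := Kks i Pi; exists i => //; apply: Kc.
move=> x y z Ux Uy Uz; have [i Pi [Kx Ky Kz]] := common3 x y z Ux Uy Uz.
by have [_ [_ [_ [_ [_ Kdistr]]]]] := Kks i Pi; apply: Kdistr.
Qed.

(* Zorn's lemma is applied to the sets A with K0 `|` A a Kleene sub-lattice,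
   so that the empty chain has an upper bound as well. *)
Lemma kleene_sublattice_in_block (K0 : set T) : kleene_sublattice c K0 ->
  exists2 K, kleene_block c K & K0 `<=` K.
Proof.
move=> K0ks; pose P A := kleene_sublattice c (K0 `|` A).
have [A [PA Amax]] : exists A, P A /\ forall B, A `<` B -> ~ P B.
  apply: Zorn_bigcup => F FP Ftot.
  have [->|F_nonempty] := eqVneq F set0.
    by rewrite /P bigcup_set0 setU0.
  rewrite /P -bigcupUr; last exact/set0P.
  apply: kleene_sublattice_bigcup => [|//|A B FA FB]; first exact/set0P.
  by case: (Ftot A B FA FB) => AB; [left | right]; apply: setUS.
exists (K0 `|` A); last exact: subsetUl.
split=> // K' K'ks AK' x K'x; apply: contrapT => AKx.
apply: (Amax K'); last by rewrite /P setUidr // => y K0y; apply/AK'; left.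
split=> [y Ay|K'A]; first by apply/AK'; right.
by apply: AKx; right; apply: K'A.
Qed.

End KleeneBlockExtension.

Section TruthTables.
Local Open Scope nat_scope.

(* Entry [i] is the truth table of [gen i] below over the six valuations
   (a, b) = (0,0), (0,1), (0,2), (1,1), (1,2), (2,2) in the Kleene chain
   0 < 1 < 2 with x' = 2 - x; entry [19 - i] is the table of the complement. *)
Definition truth_tables : seq (seq nat) :=
  [:: [:: 0; 0; 0; 0; 0; 0]; [:: 0; 0; 0; 1; 0; 0]; [:: 0; 0; 0; 1; 1; 0];
      [:: 0; 1; 0; 1; 0; 0]; [:: 0; 1; 0; 1; 1; 0]; [:: 0; 0; 0; 1; 1; 2];
      [:: 2; 1; 0; 1; 0; 0]; [:: 0; 1; 0; 1; 1; 2]; [:: 0; 1; 2; 1; 1; 0];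
      [:: 2; 1; 0; 1; 1; 0]; [:: 0; 1; 2; 1; 1; 2]; [:: 2; 1; 0; 1; 1; 2];
      [:: 2; 1; 2; 1; 1; 0]; [:: 0; 1; 2; 1; 2; 2]; [:: 2; 2; 2; 1; 1; 0];
      [:: 2; 1; 2; 1; 1; 2]; [:: 2; 1; 2; 1; 2; 2]; [:: 2; 2; 2; 1; 1; 2];
      [:: 2; 2; 2; 1; 2; 2]; [:: 2; 2; 2; 2; 2; 2]].

Definition truth_table (i : nat) : seq nat := nth [::] truth_tables i.

Definition table_op (op : nat -> nat -> nat) (i j : nat) : nat :=
  index [seq op p.1 p.2 | p <- zip (truth_table i) (truth_table j)] truth_tables.

Definition table_meet := table_op minn.
Definition table_join := table_op maxn.

Let I20 := iota 0 20.

Lemma below20_all2 (P : nat -> nat -> bool) :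
  all (fun i => all (P i) I20) I20 -> forall i j, i < 20 -> j < 20 -> P i j.
Proof.
move=> /allP P_all i j i20 j20.
have /allP Pi_all : all (P i) I20 by apply: P_all; rewrite mem_iota.
by apply: Pi_all; rewrite mem_iota.
Qed.

Lemma below20_all3 (P : nat -> nat -> nat -> bool) :
  all (fun i => all (fun j => all (P i j) I20) I20) I20 ->
  forall i j k, i < 20 -> j < 20 -> k < 20 -> P i j k.
Proof.
move=> /allP P_all i j k i20 j20 k20.
by apply: (below20_all2 _ j20 k20); apply: P_all; rewrite mem_iota.
Qed.

Lemma table_meet_lt i j : i < 20 -> j < 20 -> table_meet i j < 20.
Proof.
move: i j; apply: (below20_all2 (P := fun i j => table_meet i j < 20)).
by vm_compute.
Qed.

Lemma table_join_compl i j : i < 20 -> j < 20 ->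
  table_join i j = 19 - table_meet (19 - i) (19 - j).
Proof.
move=> i20 j20; apply/eqP; move: i j i20 j20.
apply: (below20_all2
  (P := fun i j => table_join i j == 19 - table_meet (19 - i) (19 - j))).
by vm_compute.
Qed.

Lemma table_join_lt i j : i < 20 -> j < 20 -> table_join i j < 20.
Proof. by move=> i20 j20; rewrite table_join_compl // ltnS leq_subr. Qed.

Lemma table_meet_joinr i j k : i < 20 -> j < 20 -> k < 20 ->
  table_meet i (table_join j k) = table_join (table_meet i j) (table_meet i k).
Proof.
move=> i20 j20 k20; apply/eqP; move: i j k i20 j20 k20.
apply: (below20_all3 (P := fun i j k => table_meet i (table_join j k) ==
  table_join (table_meet i j) (table_meet i k))).
by vm_compute.
Qed.

End TruthTables.

Section GeneratedSubalgebra.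
Variables (d : Order.disp_t) (T : tbLatticeType d) (c : T -> T).
Hypothesis c_anti : forall x y : T, x <= y -> c y <= c x.
Hypothesis cK : forall x : T, c (c x) = x.
Hypothesis sp1 : forall x y : T, x <= y ->
  c x `&` y = (x `&` c x) `|` (y `&` c y) ->
  y `&` (x `|` c x) = x `|` (y `&` c y).
Hypothesis sp2 : forall x y : T, x <= y ->
  (x `&` c x) `|` (y `&` c y) = (c x `&` y) `&` c (c x `&` y).
Variables (a b : T).
Hypothesis ab : a <= b.

Definition gen (n : nat) : T :=
  match n with
  | 0 => \bot
  | 1 => a `&` c b
  | 2 => a `&` c a
  | 3 => b `&` c b
  | 4 => (a `&` c a) `|` (b `&` c b)
  | 5 => a
  | 6 => c b
  | 7 => a `|` (b `&` c b)
  | 8 => c a `&` b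
  | 9 => c b `|` (a `&` c a)
  | 10 => b `&` (c a `|` a)
  | 11 => a `|` c b
  | 12 => c a `&` (c b `|` b)
  | 13 => b
  | 14 => c a
  | 15 => (c a `|` a) `&` (c b `|` b)
  | 16 => c b `|` b
  | 17 => c a `|` a
  | 18 => c a `|` b
  | _ => \top
  end.

Lemma gen_compl i : (i < 20)%N -> c (gen i) = gen (19 - i).
Proof.
do 20 (case: i => [|i];
  first by rewrite /= ?(complI c_anti cK, complU c_anti cK, cK, compl0 c_anti cK,
                        compl1 c_anti cK)).
by [].
Qed.

Ltac gen_meet_case :=
  match goal with |- context [table_meet ?i ?j] =>
    let k := eval vm_compute in (table_meet i j) in
    change (table_meet i j) with k
  end;
  rewrite /=; apply: le_anti; apply/andP; split; first [lat_solve 0 | lat_hyp 1].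

Lemma gen_meet i j : (i < 20)%N -> (j < 20)%N ->
  gen i `&` gen j = gen (table_meet i j).
Proof.
have ba := c_anti ab.
have sp2_ab := sp2_le c_anti cK sp2 ab.
have om_ab := sp_meet_join_le_dual c_anti cK sp1 sp2 ab.
have om_ba := sp_meet_join_le_dual c_anti cK sp1 sp2 ba; rewrite !cK in om_ba.
do 20 (case: i => [|i];
  [do 20 (case: j => [|j]; [move=> _ _; gen_meet_case |]); by [] |]).
by [].
Qed.

Lemma gen_join i j : (i < 20)%N -> (j < 20)%N ->
  gen i `|` gen j = gen (table_join i j).
Proof.
move=> i20 j20; have compl_lt k : (19 - k < 20)%N by rewrite ltnS leq_subr.
rewrite table_join_compl // -[LHS]cK complU // !gen_compl //.
by rewrite gen_meet ?compl_lt // gen_compl // table_meet_lt ?compl_lt.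
Qed.

Definition gen_set (x : T) : Prop := exists2 i, (i < 20)%N & x = gen i.

Lemma gen_set_kleene : kleene_sublattice c gen_set.
Proof.
split; first by exists 0.
split; first by exists 19.
split.
  move=> _ _ [i i20 ->] [j j20 ->].
  by exists (table_meet i j); [exact: table_meet_lt | exact: gen_meet].
split.
  move=> _ _ [i i20 ->] [j j20 ->].
  by exists (table_join i j); [exact: table_join_lt | exact: gen_join].
split.
  move=> _ [i i20 ->].
  by exists (19 - i); [rewrite ltnS leq_subr | exact: gen_compl].
move=> _ _ _ [i i20 ->] [j j20 ->] [k k20 ->].
rewrite (gen_join j20 k20) (gen_meet i20 (table_join_lt j20 k20)).
rewrite (gen_meet i20 j20) (gen_meet i20 k20).
rewrite (gen_join (table_meet_lt i20 j20) (table_meet_lt i20 k20)).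
by rewrite table_meet_joinr.
Qed.

Lemma gen_set_a : gen_set a. Proof. by exists 5. Qed.
Lemma gen_set_b : gen_set b. Proof. by exists 13. Qed.

End GeneratedSubalgebra.

Theorem theorem3p13 (d : Order.disp_t) (T : tbLatticeType d) (c : T -> T) :
  pseudo_kleene c -> (sp_orthomodular c <-> pasting_of_kleene_blocks c).
Proof.
move=> [c_anti cK _]; split.
- move=> [sp1 sp2] x y; split=> [xy|[K [_ _ _ //]]].
  have [K Kblock genK] :=
    kleene_sublattice_in_block (gen_set_kleene c_anti cK sp1 sp2 xy).
  by exists K; split=> //; apply: genK; [exact: gen_set_a | exact: gen_set_b].
- move=> paste; split=> x y xy; have [K [[Kks _] Kx Ky _]] := (paste x y).1 xy.
  + exact: (kleene_sublattice_sp1 Kks Kx Ky xy).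
  + exact: (kleene_sublattice_sp2 c_anti cK Kks Kx Ky xy).
Qed.
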